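(* Let $(\Omega,\mathcal F,\mathbb P)$ be a probability space, let $\mathfrak d,N\in\mathbb N$, let $\|\cdot\|$ be a norm on $\mathbb R^{\mathfrak d}$, let $\mathfrak H\subseteq\mathbb R^{\mathfrak d}$ be a set, let $\vartheta\in\mathfrak H$, $L,\varepsilon\in(0,\infty)$, let $\mathfrak E\colon\mathfrak H\times\Omega\to\mathbb R$ be $(\mathcal B(\mathfrak H)\otimes\mathcal F)/\mathcal B(\mathbb R)$-measurable with $|\mathfrak E(x,\omega)-\mathfrak E(y,\omega)|\le L\|x-y\|$ for all $x,y\in\mathfrak H$, $\omega\in\Omega$, and let $\Theta_n\colon\Omega\to\mathfrak H$, $n\in\{1,\dots,N\}$, be i.i.d. random variables. Then, writing $\mathfrak E(\Theta_n)$ for $\omega\mapsto\mathfrak E(\Theta_n(\omega),\omega)$ and $\mathfrak E(\vartheta)$ for $\omega\mapsto\mathfrak E(\vartheta,\omega)$, $$\mathbb P\Bigl(\bigl[\min_{n\in\{1,\dots,N\}}\mathfrak E(\Theta_n)\bigr]-\mathfrak E(\vartheta)>\varepsilon\Bigr)\le\Bigl[\mathbb P\bigl(\|\Theta_1-\vartheta\|>\tfrac{\varepsilon}L\bigr)\Bigr]^N\le\exp\Bigl(-N\,\mathbb P\bigl(\|\Theta_1-\vartheta\|\le\tfrac{\varepsilon}L\bigr)\Bigr).$$ *)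

From mathcomp Require Import all_boot all_algebra.
From mathcomp Require Import all_classical all_reals all_analysis.
Set Implicit Arguments.
Unset Strict Implicit.
Import GRing.Theory Num.Theory.
Local Open Scope ring_scope.
Local Open Scope classical_set_scope.

Definition is_norm (R : realType) (d : nat) (nrm : 'rV[R]_d -> R) : Prop :=
  [/\ (forall x, 0 <= nrm x),
      (forall x, nrm x = 0 -> x = 0),
      (forall (a : R) x, nrm (a *: x) = `|a| * nrm x) &
      (forall x y, nrm (x + y) <= nrm x + nrm y)].

Definition nrm_open (R : realType) (d : nat) (nrm : 'rV[R]_d -> R)
  (U : set 'rV[R]_d) : Prop :=
  forall x, U x -> exists2 r : R, 0 < r & forall y, nrm (y - x) < r -> U y.

Definition borel_rV (R : realType) (d : nat) (nrm : 'rV[R]_d -> R)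
  : set (set 'rV[R]_d) := <<s nrm_open nrm >>.

Definition prod_sigma (R : realType) (d : nat) (nrm : 'rV[R]_d -> R)
  (dT : measure_display) (T : measurableType dT) : set (set ('rV[R]_d * T)) :=
  <<s [set A `*` B | A in borel_rV nrm & B in [set B : set T | measurable B]] >>.

(* E : H x Omega -> R is (B(H) (x) F)/B(R)-measurable.  The sigma-algebra
   B(H) (x) F on H x Omega is the trace of B(R^d) (x) F on H x Omega. *)
Definition jointly_measurable_on (R : realType) (d : nat) (nrm : 'rV[R]_d -> R)
  (dT : measure_display) (T : measurableType dT) (H : set 'rV[R]_d)
  (E : 'rV[R]_d -> T -> R) : Prop :=
  forall U : set R, measurable U ->
    exists2 S, @prod_sigma R d nrm dT T S &
      [set p : 'rV[R]_d * T | H p.1 /\ U (E p.1 p.2)] = (H `*` setT) `&` S.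

Definition rv_in (R : realType) (d : nat) (nrm : 'rV[R]_d -> R)
  (dT : measure_display) (T : measurableType dT) (H : set 'rV[R]_d)
  (X : T -> 'rV[R]_d) : Prop :=
  (forall w, H (X w)) /\
  (forall A, borel_rV nrm A -> measurable (X @^-1` A)).

Definition iid_family (R : realType) (d : nat) (nrm : 'rV[R]_d -> R)
  (dT : measure_display) (T : measurableType dT) (P : probability T R)
  (N : nat) (Theta : nat -> T -> 'rV[R]_d) : Prop :=
  (forall n A, (1 <= n <= N)%N -> borel_rV nrm A ->
     P (Theta n @^-1` A) = P (Theta 1%N @^-1` A)) /\
  (forall A : nat -> set 'rV[R]_d, (forall n, (1 <= n <= N)%N -> borel_rV nrm (A n)) ->
     P [set w | forall n, (1 <= n <= N)%N -> A n (Theta n w)] =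
     (\prod_(1 <= n < N.+1) P (Theta n @^-1` A n))%E).

From mathcomp Require Import all_boot all_order all_algebra.
From mathcomp Require Import all_classical all_reals all_analysis.
From mathcomp Require Import lra.
Set Implicit Arguments.
Unset Strict Implicit.
Import GRing.Theory Num.Theory Order.TTheory.
Local Open Scope ring_scope.
Local Open Scope classical_set_scope.

(* If the best of the N samples is more than eps worse than theta, then by the
   Lipschitz bound every sample lies farther than eps / L from theta.  By
   independence the probability of the latter event is the N-th power of
   P(||Theta_1 - theta|| > eps / L) = 1 - p, and (1 - p)^N <= exp(-N p)
   because 1 + x <= exp x. *)

Section NormFacts.
Variables (R : realType) (d : nat) (nrm : 'rV[R]_d -> R).
Hypothesis nrm_norm : is_norm nrm.

Lemma is_norm_distC x y : nrm (x - y) = nrm (y - x).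
Proof.
have [_ _ nrmZ _] := nrm_norm.
by rewrite -opprB -scaleN1r nrmZ normrN1 mul1r.
Qed.

Lemma nrm_open_far (c : 'rV[R]_d) (r : R) :
  nrm_open nrm [set x | r < nrm (x - c)].
Proof.
have [_ _ _ nrmD] := nrm_norm.
move=> x /= rx; exists (nrm (x - c) - r); first by rewrite subr_gt0.
move=> y xy; have := nrmD (x - y) (y - c).
by rewrite addrA subrK (is_norm_distC x y); lra.
Qed.

Lemma borel_rV_far (c : 'rV[R]_d) (r : R) :
  borel_rV nrm [set x | r < nrm (x - c)].
Proof. by apply: sub_gen_smallest; exact: nrm_open_far. Qed.

End NormFacts.

Section Measurability.
Variables (R : realType) (d : nat) (nrm : 'rV[R]_d -> R).
Variables (dT : measure_display) (T : measurableType dT).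

Lemma prod_sigma_graph_measurable (X : T -> 'rV[R]_d) :
  (forall A, borel_rV nrm A -> measurable (X @^-1` A)) ->
  forall S, prod_sigma nrm S -> measurable ((fun w => (X w, w)) @^-1` S).
Proof.
move=> mX; apply: smallest_sub.
- split=> [|A mA|F mF]; first by rewrite preimage_set0.
  + by rewrite setTD -preimage_setC; exact: measurableC.
  + by rewrite preimage_bigcup; exact: bigcupT_measurable.
- move=> _ [A bA [B mB <-]].
  exact: measurableI (mX _ bA) mB.
Qed.

Lemma jointly_measurable_comp (H : set 'rV[R]_d) (E : 'rV[R]_d -> T -> R)
    (X : T -> 'rV[R]_d) :
  jointly_measurable_on nrm H E -> (forall w, H (X w)) ->
  (forall A, borel_rV nrm A -> measurable (X @^-1` A)) ->
  measurable_fun setT (fun w => E (X w) w).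
Proof.
move=> mE HX mX _ U mU; rewrite setTI.
have [S PS ES] := mE U mU.
suff -> : (fun w => E (X w) w) @^-1` U = (fun w => (X w, w)) @^-1` S.
  exact: prod_sigma_graph_measurable.
apply/seteqP; split=> w /= inw.
- have : [set p | H p.1 /\ U (E p.1 p.2)] (X w, w) by exact: conj (HX w) inw.
  by rewrite ES => -[].
- have : ((H `*` setT) `&` S) (X w, w) by exact: conj (conj (HX w) I) inw.
  by rewrite -ES => -[].
Qed.

Lemma measurable_bigmin (I : eqType) (r : seq I) (f0 : T -> R)
    (f : I -> T -> R) :
  measurable_fun setT f0 -> (forall i, i \in r -> measurable_fun setT (f i)) ->
  measurable_fun setT (fun w => \big[Num.min/f0 w]_(i <- r) f i w).
Proof.
move=> mf0; elim: r => [|i r IHr] mf.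
  by under eq_fun do rewrite big_nil.
under eq_fun do rewrite big_cons.
apply: measurable_realfun.measurable_minr; first by apply: mf; rewrite mem_head.
by apply: IHr => j rj; apply: mf; rewrite in_cons rj orbT.
Qed.

End Measurability.

Lemma bigmin_le_mem (disp : Order.disp_t) (T : orderType disp) (I : eqType)
    (r : seq I) (x : T) (F : I -> T) (j : I) :
  j \in r -> (\big[Order.min/x]_(i <- r) F i <= F j)%O.
Proof.
elim: r => [|i r IHr] //; rewrite big_cons in_cons => /orP[/eqP <-|rj].
  by rewrite ge_min lexx.
by rewrite ge_min IHr ?orbT.
Qed.

Lemma lipschitz_bigmin_far (R : realType) (d : nat) (nrm : 'rV[R]_d -> R)
    (H : set 'rV[R]_d) (E : 'rV[R]_d -> R) (L eps m0 : R) (theta : 'rV[R]_d)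
    (I : eqType) (r : seq I) (X : I -> 'rV[R]_d) :
  0 < L -> (forall x y, H x -> H y -> `|E x - E y| <= L * nrm (x - y)) ->
  H theta -> (forall i, i \in r -> H (X i)) ->
  eps < \big[Num.min/m0]_(i <- r) E (X i) - E theta ->
  forall i, i \in r -> eps / L < nrm (X i - theta).
Proof.
move=> L_gt0 E_lip Htheta HX gap i ri; rewrite ltNge; apply/negP => near.
have EXi : E (X i) - E theta <= eps.
  apply: le_trans (ler_norm _) (le_trans (E_lip _ _ (HX i ri) Htheta) _).
  by rewrite -ler_pdivlMl // mulrC.
have := bigmin_le_mem m0 (fun i => E (X i)) ri; lra.
Qed.

Lemma prode_cst_nat (R : realDomainType) (x : \bar R) (m n : nat) :
  (\prod_(m <= i < n) x = x ^+ (n - m))%E.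
Proof. by rewrite big_const_nat iter_mule mule1. Qed.

Lemma iid_all_in (R : realType) (d : nat) (nrm : 'rV[R]_d -> R)
    (dT : measure_display) (T : measurableType dT) (P : probability T R)
    (N : nat) (Theta : nat -> T -> 'rV[R]_d) (A : set 'rV[R]_d) :
  iid_family nrm P N Theta -> borel_rV nrm A ->
  P [set w | forall n, (1 <= n <= N)%N -> A (Theta n w)] =
  (P (Theta 1%N @^-1` A) ^+ N)%E.
Proof.
move=> [ident indep] bA; rewrite (indep (fun _ => A)) //.
transitivity (\prod_(1 <= n < N.+1) P (Theta 1%N @^-1` A))%E.
  by apply: eq_big_nat => n /andP[n_ge1 n_le]; rewrite ident // n_ge1 -ltnS.
by rewrite prode_cst_nat subn1.
Qed.

Lemma onemX_le_expR (R : realType) (p : R) (n : nat) :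
  p <= 1 -> (1 - p) ^+ n <= expR (- n%:R * p).
Proof.
move=> p_le1; rewrite mulNr -mulrN expRM_natl.
apply: lerXn2r; rewrite ?nnegrE ?expR_ge0 ?subr_ge0 //.
exact: expR_ge1Dx.
Qed.

Lemma probability_powe_le_expR (R : realType) (dT : measure_display)
    (T : measurableType dT) (P : probability T R) (A : set T) (n : nat) :
  measurable A -> (P A ^+ n <= (expR (- n%:R * fine (P (~` A))))%:E)%E.
Proof.
move=> mA; rewrite probability_setC //.
have PA_fin : P A \is a fin_num.
  by rewrite ge0_fin_numE // (le_lt_trans (probability_le1 P mA)) ?ltry.
rewrite -(fineK PA_fin) -EFinB /= -EFin_expe lee_fin.
rewrite -[X in X ^+ n](subKr 1) onemX_le_expR //.
by rewrite lerBlDr lerDl fine_ge0.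
Qed.

Theorem lemma3p22 (R : realType) (dT : measure_display) (T : measurableType dT)
  (P : probability T R) (d N : nat) (nrm : 'rV[R]_d -> R)
  (H : set 'rV[R]_d) (theta : 'rV[R]_d) (L eps : R)
  (E : 'rV[R]_d -> T -> R) (Theta : nat -> T -> 'rV[R]_d) :
  (0 < N)%N ->
  is_norm nrm ->
  H theta ->
  0 < L -> 0 < eps ->
  jointly_measurable_on nrm H E ->
  (forall x y w, H x -> H y -> `|E x w - E y w| <= L * nrm (x - y)) ->
  (forall n, (1 <= n <= N)%N -> rv_in nrm H (Theta n)) ->
  iid_family nrm P N Theta ->
  (P [set w | (\big[Num.min/E (Theta 1%N w) w]_(1 <= n < N.+1) E (Theta n w) w
                - E theta w > eps)%R]
     <= (P [set w | (nrm (Theta 1%N w - theta) > eps / L)%R]) ^+ N)%E /\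
  ((P [set w | (nrm (Theta 1%N w - theta) > eps / L)%R]) ^+ N
     <= (expR (- N%:R * fine (P [set w | (nrm (Theta 1%N w - theta) <= eps / L)%R]))%R)%:E)%E.
Proof.
move=> N_gt0 nrm_norm Htheta L_gt0 _ mE E_lip rvTheta iid.
set far := [set x | eps / L < nrm (x - theta)].
have bfar : borel_rV nrm far by exact: borel_rV_far.
have in_range n : n \in index_iota 1 N.+1 -> (1 <= n <= N)%N.
  by rewrite mem_index_iota ltnS.
have mETheta n : (1 <= n <= N)%N -> measurable_fun setT (fun w => E (Theta n w) w).
  by move=> /rvTheta[HTheta mTheta]; exact: jointly_measurable_comp mE HTheta mTheta.
have mEtheta : measurable_fun setT (E theta).
  apply: (jointly_measurable_comp (X := cst theta) mE (fun=> Htheta)) => A _.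
  by rewrite preimage_cst; case: ifP.
have N_range : (1 <= 1 <= N)%N by rewrite leqnn N_gt0.
split.
- rewrite -(iid_all_in iid bfar); apply: le_measure; rewrite ?inE.
  + rewrite -preimage_itvoy -[X in measurable X]setTI.
    apply: (measurable_realfun.measurable_funB _ mEtheta measurableT (measurable_itv _)).
    by apply: measurable_bigmin => [|n /in_range]; exact: mETheta.
  + by apply: bigcap_measurableType => n /rvTheta[_]; apply.
  + move=> w /= gap n n_range.
    apply: (lipschitz_bigmin_far L_gt0 (fun x y => E_lip x y w) Htheta _ gap).
    * by move=> i /in_range /rvTheta[].
    * by rewrite mem_index_iota ltnS.
- have -> : [set w | nrm (Theta 1%N w - theta) <= eps / L] = ~` (Theta 1%N @^-1` far).
    by apply/seteqP; split=> w /=; rewrite leNgt => /negP.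
  by apply: probability_powe_le_expR; exact: (rvTheta 1%N N_range).2 _ bfar.
Qed.
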